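(* Let $(\mathfrak{n},J,\langle\cdot,\cdot\rangle)$ be a Hermitian real nilpotent Lie algebra with $\dim\mathfrak{n}=2d$ and $\dim[\mathfrak{n},\mathfrak{n}]=1$. Then $\langle\cdot,\cdot\rangle$ is pluriclosed if and only if $\mathfrak{n}$ is isomorphic to $\mathbb{R}^{2d-3}\oplus\mathfrak{h}_3$.
   Context: $\mathfrak{h}_{2m+1}$ is the Heisenberg Lie algebra with basis $x_1,\dots,x_m,y_1,\dots,y_m,z$ and nonzero brackets $[x_i,y_i]=-[y_i,x_i]=z$; $\mathbb{R}^k$ denotes the $k$-dimensional abelian Lie algebra. A complex structure is a linear map $J$ with $J^2=-I$ and $[x,y]+J([Jx,y]+[x,Jy])-[Jx,Jy]=0$ for all $x,y$; $\langle\cdot,\cdot\rangle$ is Hermitian if $\langle Jx,Jy\rangle=\langle x,y\rangle$. Torsion 3-form: $c(x,y,z)=-\langle[Jx,Jy],z\rangle-\langle[Jy,Jz],x\rangle-\langle[Jz,Jx],y\rangle$; $\langle\cdot,\cdot\rangle$ is pluriclosed if $dc=0$ for the Chevalley–Eilenberg differential $d$. *)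

From HB Require Import structures.
From mathcomp Require Import all_boot all_order all_algebra.
From mathcomp Require Import reals.
Set Implicit Arguments. Unset Strict Implicit. Unset Printing Implicit Defensive.
Import Order.TTheory GRing.Theory Num.Theory.
Local Open Scope ring_scope.

Section Defs.
Variable R : realType.

Definition is_lie_bracket (n : nat) (br : 'rV[R]_n -> 'rV[R]_n -> 'rV[R]_n) : Prop :=
  [/\ (forall (a : R) x y z, br (a *: x + y) z = a *: br x z + br y z),
      (forall (a : R) x y z, br x (a *: y + z) = a *: br x y + br x z),
      (forall x y, br x y = - br y x) &
      (forall x y z, br x (br y z) + br y (br z x) + br z (br x y) = 0)].

(* lcs_elt br k xs = [x_k,[x_{k-1},[...,[x_1,x_0]]]]; these span C^{k+1} *)
Fixpoint lcs_elt (n : nat) (br : 'rV[R]_n -> 'rV[R]_n -> 'rV[R]_n)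
    (k : nat) (xs : nat -> 'rV[R]_n) : 'rV[R]_n :=
  match k with
  | 0 => xs 0%N
  | k'.+1 => br (xs k) (lcs_elt br k' xs)
  end.

Definition is_nilpotent (n : nat) (br : 'rV[R]_n -> 'rV[R]_n -> 'rV[R]_n) : Prop :=
  exists k : nat, forall xs : nat -> 'rV[R]_n, lcs_elt br k xs = 0.

Definition derived_dim_one (n : nat) (br : 'rV[R]_n -> 'rV[R]_n -> 'rV[R]_n) : Prop :=
  exists z : 'rV[R]_n, z != 0 /\
    (forall x y, exists a : R, br x y = a *: z) /\
    (exists x y, br x y = z).

(* integrable complex structure; J acts on row vectors by x |-> x *m J *)
Definition is_complex_structure (n : nat) (br : 'rV[R]_n -> 'rV[R]_n -> 'rV[R]_n)
    (J : 'M[R]_n) : Prop :=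
  J *m J = - 1%:M /\
  forall x y, br x y + (br (x *m J) y + br x (y *m J)) *m J - br (x *m J) (y *m J) = 0.

Definition is_inner_product (n : nat) (ip : 'rV[R]_n -> 'rV[R]_n -> R) : Prop :=
  [/\ (forall (a : R) x y z, ip (a *: x + y) z = a * ip x z + ip y z),
      (forall x y, ip x y = ip y x) &
      (forall x, x != 0 -> 0 < ip x x)].

Definition is_hermitian (n : nat) (J : 'M[R]_n) (ip : 'rV[R]_n -> 'rV[R]_n -> R) : Prop :=
  forall x y, ip (x *m J) (y *m J) = ip x y.

Definition torsion (n : nat) (br : 'rV[R]_n -> 'rV[R]_n -> 'rV[R]_n) (J : 'M[R]_n)
    (ip : 'rV[R]_n -> 'rV[R]_n -> R) (x y z : 'rV[R]_n) : R :=
  - ip (br (x *m J) (y *m J)) z - ip (br (y *m J) (z *m J)) x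
  - ip (br (z *m J) (x *m J)) y.

(* Chevalley--Eilenberg differential of a 3-form:
   dc(x0,x1,x2,x3) = sum_{i<j} (-1)^(i+j) c([xi,xj], ...) *)
Definition CE_d3 (n : nat) (br : 'rV[R]_n -> 'rV[R]_n -> 'rV[R]_n)
    (c : 'rV[R]_n -> 'rV[R]_n -> 'rV[R]_n -> R) (x0 x1 x2 x3 : 'rV[R]_n) : R :=
  - c (br x0 x1) x2 x3 + c (br x0 x2) x1 x3 - c (br x0 x3) x1 x2
  - c (br x1 x2) x0 x3 + c (br x1 x3) x0 x2 - c (br x2 x3) x0 x1.

Definition is_pluriclosed (n : nat) (br : 'rV[R]_n -> 'rV[R]_n -> 'rV[R]_n)
    (J : 'M[R]_n) (ip : 'rV[R]_n -> 'rV[R]_n -> R) : Prop :=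
  forall x0 x1 x2 x3, CE_d3 br (torsion br J ip) x0 x1 x2 x3 = 0.

Definition lie_isomorphic (m n : nat)
    (br1 : 'rV[R]_m -> 'rV[R]_m -> 'rV[R]_m)
    (br2 : 'rV[R]_n -> 'rV[R]_n -> 'rV[R]_n) : Prop :=
  exists f : 'rV[R]_m -> 'rV[R]_n,
    [/\ (forall (a : R) x y, f (a *: x + y) = a *: f x + f y),
        bijective f &
        (forall x y, f (br1 x y) = br2 (f x) (f y))].

(* R^k (+) h_3 on 'rV_(k+3): basis x = e_0, y = e_1, z = e_2 of h_3,
   e_3..e_(k+2) abelian; only nonzero bracket [x,y] = -[y,x] = z *)
Definition abelian_plus_h3_bracket (k : nat) (u v : 'rV[R]_(k.+3)) : 'rV[R]_(k.+3) :=
  (u 0 (inord 0) * v 0 (inord 1) - u 0 (inord 1) * v 0 (inord 0))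
    *: delta_mx 0 (inord 2).

End Defs.

From mathcomp Require Import all_boot all_order all_algebra.
From mathcomp Require Import reals ring lra.
Set Implicit Arguments. Unset Strict Implicit. Unset Printing Implicit Defensive.
Import Order.TTheory GRing.Theory Num.Theory.
Local Open Scope ring_scope.

(* Since [n, n] = R z, the bracket is [a, b] = w(a, b) z for a skew form w.
   Nilpotency makes z central (ad_a multiplies z by w(a, z)), and integrability
   of J makes w J-invariant.  The torsion then collapses, and dc(x0, x1, x2, x3)
   is 2 |z|^2 times the Plücker expression of w, so the metric is pluriclosed
   exactly when w = alpha /\ beta has rank two.  Rank two is in turn exactly
   R^(2d-3) (+) h_3: with w(x, y) = 1, the functionals w(., y), w(x, .) and a
   z-coordinate extend to a basis of the dual whose remaining members kill z,
   and in the dual coordinates [e_0, e_1] = e_2 is the only bracket. *)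

Section LinearFunctionals.
Variable F : fieldType.

Definition lin_functional n (phi : 'rV[F]_n -> F) :=
  forall a u v, phi (a *: u + v) = a * phi u + phi v.

Lemma lin_functional_sum_delta n (phi : 'rV[F]_n -> F) : lin_functional phi ->
  forall u, phi u = \sum_j u 0 j * phi (delta_mx 0 j).
Proof.
move=> phiL u; have phi0 : phi 0 = 0.
  by have := phiL 1 0 0; rewrite scale1r addr0 mul1r -{1}[phi 0]addr0 => /addrI/esym.
rewrite {1}(row_sum_delta u); elim/big_rec2: _ => // j s t _ <-.
by rewrite phiL.
Qed.

Definition functional_mx m n (phi : 'I_m -> 'rV[F]_n -> F) : 'M_(m, n) :=
  \matrix_(i, j) phi i (delta_mx 0 j).

Lemma mul_tr_functional_mx m n (phi : 'I_m -> 'rV[F]_n -> F) u :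
  (forall i, lin_functional (phi i)) -> u *m (functional_mx phi)^T = \row_i phi i u.
Proof.
move=> phiL; apply/rowP=> i; rewrite !mxE (lin_functional_sum_delta (phiL i)).
by apply: eq_bigr => j _; rewrite !mxE.
Qed.

Lemma row_free_functional_mx m n (phi : 'I_m -> 'rV[F]_n -> F) (us : 'I_m -> 'rV[F]_n) :
  (forall i, lin_functional (phi i)) ->
  (forall i j : 'I_m, (i < j)%N -> phi i (us j) = 0) -> (forall i, phi i (us i) != 0) ->
  row_free (functional_mx phi).
Proof.
move=> phiL trig diag; pose P := functional_mx phi *m (\matrix_j us j)^T.
have PE i j : P i j = phi i (us j).
  rewrite !mxE (lin_functional_sum_delta (phiL i)).
  by apply: eq_bigr => l _; rewrite !mxE mulrC.
have : P \in unitmx.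
  rewrite unitmxE det_trig; last by apply/is_trig_mxP => i j ij; rewrite PE trig.
  by rewrite unitfE; apply/prodf_neq0 => i _; rewrite PE.
rewrite -row_free_unit /row_free => /eqP rkP.
by rewrite eqn_leq rank_leq_row -{1}rkP mxrankM_maxl.
Qed.

Lemma col_mx_completion m k (A : 'M[F]_(m, m + k)) :
  row_free A -> exists B : 'M_(k, m + k), col_mx A B \in unitmx.
Proof.
move=> freeA; pose U : 'M[F]_(m, m + k) := row_mx 1%:M 0.
have UA : U *m col_mx A 0 = A by rewrite mul_row_col mul1mx mul0mx addr0.
have [|g g_unit Ug] := @complete_unitmx F m (m + k) U (col_mx A 0).
  by rewrite UA (eqP freeA) /U -pid_mx_row rank_pid_mx ?leq_addr.
exists (dsubmx g).
have -> : A = usubmx g by rewrite -UA Ug -[g in U *m g]vsubmxK mul_row_col mul1mx mul0mx addr0.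
by rewrite vsubmxK.
Qed.

Lemma col_mx_completion_vanishing m k (A : 'M[F]_(m, m + k)) (z : 'rV_(m + k)) i :
  row_free A -> (z *m A^T) 0 i = 1 ->
  exists2 B : 'M_(k, m + k), col_mx A B \in unitmx & B *m z^T = 0.
Proof.
move=> freeA zAi; have [B0 B0_unit] := col_mx_completion freeA.
pose c := B0 *m z^T; exists (B0 - c *m row i A).
  have -> : col_mx A (B0 - c *m row i A) =
            block_mx 1%:M 0 (- c *m delta_mx 0 i) 1%:M *m col_mx A B0.
    by rewrite mul_block_col !mul1mx mul0mx addr0 mulNmx rowE [c *m _]mulmxA addrC mulNmx.
  by rewrite (@unitmx_mul F) B0_unit unitmxE det_lblock !det1 mulr1 unitr1.
rewrite mulmxBl -mulmxA; have -> : row i A *m z^T = 1%:M.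
  by apply/rowP => j; rewrite ord1 -zAi !mxE; apply: eq_bigr => l _; rewrite !mxE mulrC.
by rewrite mulmx1 subrr.
Qed.

End LinearFunctionals.

Definition plucker_form (R : pzRingType) (T : Type) (w : T -> T -> R) a b c e : R :=
  w a b * w c e - w a c * w b e + w a e * w b c.

Definition plucker (R : pzRingType) (T : Type) (w : T -> T -> R) : Prop :=
  forall a b c e, plucker_form w a b c e = 0.

Section BracketForm.
Variables (R : realType) (n : nat) (br : 'rV[R]_n -> 'rV[R]_n -> 'rV[R]_n)
  (w : 'rV[R]_n -> 'rV[R]_n -> R) (z : 'rV[R]_n).
Hypothesis brE : forall a b, br a b = w a b *: z.
Hypothesis wDl : forall c a b e, w (c *: a + b) e = c * w a e + w b e.
Hypothesis wN : forall a b, w a b = - w b a.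

Lemma w0l a : w 0 a = 0.
Proof.
by have := wDl 1 0 0 a; rewrite scale1r addr0 mul1r -{1}[w 0 a]addr0 => /addrI/esym.
Qed.

Lemma wZl c a b : w (c *: a) b = c * w a b.
Proof. by rewrite -[c *: a]addr0 wDl w0l addr0. Qed.

Lemma wZr c a b : w a (c *: b) = c * w a b.
Proof. by rewrite wN wZl wN mulrN opprK. Qed.

Lemma wDr c a b e : w e (c *: a + b) = c * w e a + w e b.
Proof. by rewrite wN wDl (wN a) (wN b) mulrN opprD !opprK. Qed.

Lemma w_alt a : w a a = 0.
Proof. by apply/eqP; rewrite -[_ == 0](mulrn_eq0 _ 2) mulr2n {1}wN addNr. Qed.

Lemma nilpotent_form_central : z != 0 -> is_nilpotent br -> forall a, w a z = 0.
Proof.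
move=> z0 [k nilk] a; pose xs i := if i is 0 then z else a.
have lcsE m : lcs_elt br m xs = w a z ^+ m *: z.
  elim: m => [|m IHm] /=; first by rewrite expr0 scale1r.
  by rewrite brE IHm wZr exprSr mulrC.
have := nilk xs; rewrite lcsE => /eqP; rewrite scaler_eq0 (negbTE z0) orbF.
by rewrite expf_eq0 => /andP[_ /eqP].
Qed.

(* Integrability says [(A - C) z = - B zJ] with A = w(a,b), B = w(Ja,b) + w(a,Jb),
   C = w(Ja,Jb); applying J once more gives ((A - C)^2 + B^2) z = 0. *)
Lemma complex_structure_form_invariant J : z != 0 -> is_complex_structure br J ->
  forall a b, w (a *m J) (b *m J) = w a b.
Proof.
move=> z0 [J2 integrable] a b; have := integrable a b.
rewrite !brE -scalerDl -scalemxAl.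
set A := w a b; set B := w (a *m J) b + w a (b *m J); set C := w (a *m J) (b *m J).
move=> intE.
have e1 : (A - C) *: z + B *: (z *m J) = 0 by rewrite -intE scalerBl addrAC.
have e2 : (A - C) *: (z *m J) - B *: z = 0.
  have := congr1 (mulmx^~ J) e1.
  by rewrite mulmxDl -!scalemxAl -mulmxA J2 mulmxN mulmx1 mul0mx scalerN.
have : ((A - C) ^+ 2 + B ^+ 2) *: z = 0.
  have := congr1 (fun r => (A - C) *: r) e1; have := congr1 (fun r => B *: r) e2.
  rewrite !scalerDr !scalerN !scalerA !scaler0 => h2 h1.
  rewrite -[RHS](subr0 0) -[X in _ = X - _]h1 -[X in _ = _ - X]h2.
  by apply/rowP => i; rewrite !mxE; ring.
move/eqP; rewrite scaler_eq0 (negbTE z0) orbF => /eqP sq0.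
by apply/eqP; rewrite -subr_eq0; apply/eqP; nra.
Qed.

Section Pluriclosed.
Variables (J : 'M[R]_n) (ip : 'rV[R]_n -> 'rV[R]_n -> R).
Hypothesis wz : forall a, w a z = 0.
Hypothesis wJ : forall a b, w (a *m J) (b *m J) = w a b.

Lemma CE_d3_torsion_form : is_inner_product ip -> forall x0 x1 x2 x3,
  CE_d3 br (torsion br J ip) x0 x1 x2 x3 = 2 * ip z z * plucker_form w x0 x1 x2 x3.
Proof.
move=> [ipDl ipC _] x0 x1 x2 x3.
have ipZl c a e : ip (c *: a) e = c * ip a e.
  have ip0 : ip 0 e = 0.
    by have := ipDl 1 0 0 e; rewrite scale1r addr0 mul1r -{1}[ip 0 e]addr0 => /addrI/esym.
  by rewrite -[c *: a]addr0 ipDl ip0 addr0.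
have ipZr c a e : ip e (c *: a) = c * ip e a by rewrite ipC ipZl ipC.
have wzl a : w z a = 0 by rewrite wN wz oppr0.
rewrite /CE_d3 /torsion /plucker_form !brE !wJ !wZl ?wZr ?wzl ?wz ?mulr0 !ipZl ?ipZr.
ring.
Qed.

Lemma pluriclosed_plucker : is_inner_product ip -> z != 0 ->
  is_pluriclosed br J ip <-> plucker w.
Proof.
move=> ipH z0; have zz : 0 < ip z z by case: ipH => _ _; apply.
split=> H a b c e; have := H a b c e; rewrite CE_d3_torsion_form //.
  by move/eqP; rewrite !mulf_eq0 pnatr_eq0 (gt_eqF zz) => /eqP.
by move=> ->; rewrite mulr0.
Qed.

End Pluriclosed.

Lemma plucker_lie_isomorphic k x y : z != 0 -> w x y = 1 ->
  lie_isomorphic br (@abelian_plus_h3_bracket R k) -> plucker w.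
Proof.
move=> z0 wxy [f [fL fbij fbr]].
have f0 : f 0 = 0.
  by have := fL 1 0 0; rewrite !scale1r addr0 -{1}[f 0]addr0 => /addrI/esym.
have fZ c u : f (c *: u) = c *: f u by rewrite -[c *: u]addr0 fL f0 addr0.
pose al u := f u 0 (inord 0); pose be u := f u 0 (inord 1); pose c := f z 0 (inord 2).
have wc u v : w u v * c = al u * be v - be u * al v.
  have := congr1 (fun r : 'rV_(k.+3) => r 0 (inord 2)) (fbr u v).
  by rewrite /= brE fZ /abelian_plus_h3_bracket !mxE !eqxx mulr1.
have c0 : c != 0.
  apply: contra z0 => /eqP c0; have fz0 : f z = 0.
    by rewrite -[z]scale1r -wxy -brE fbr /abelian_plus_h3_bracket -wc c0 mulr0 scale0r.
  by apply/eqP/(bij_inj fbij); rewrite fz0 f0.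
have wE u v : w u v = (al u * be v - be u * al v) / c by rewrite -wc mulfK.
by move=> a b d e; rewrite /plucker_form !wE; field.
Qed.

Section H3Coordinates.
Variables (x y : 'rV[R]_n) (i0 : 'I_n).
Hypothesis wz : forall a, w a z = 0.
Hypothesis wxy : w x y = 1.
Hypothesis zi0 : z 0 i0 != 0.

Definition h3_coord (i : 'I_3) (u : 'rV[R]_n) : R := [:: w u y; w x u; u 0 i0 / z 0 i0]`_i.

Lemma lin_functional_h3_coord i : lin_functional (h3_coord i).
Proof.
case: i => [[|[|[|//]]] ?] c u v /=; rewrite /h3_coord /=; first exact: wDl.
  exact: wDr.
by rewrite !mxE mulrDl mulrA.
Qed.

Lemma row_free_h3_coord : row_free (functional_mx h3_coord).
Proof.
apply: (row_free_functional_mx (us := fun j : 'I_3 => [:: x; y; z]`_j)).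
- exact: lin_functional_h3_coord.
- case=> [[|[|[|//]]] ?] [[|[|[|//]]] ?] //= _; rewrite /h3_coord /=.
  + exact: w_alt.
  + by rewrite wN wz oppr0.
  + exact: wz.
- by case=> [[|[|[|//]]] ?]; rewrite /h3_coord /= ?wxy ?divff ?oner_neq0.
Qed.

Lemma three_leq_dim : (3 <= n)%N.
Proof. by rewrite -(eqP row_free_h3_coord) rank_leq_col. Qed.

End H3Coordinates.
End BracketForm.

Section H3Isomorphism.
Variables (R : realType) (k : nat)
  (br : 'rV[R]_(k.+3) -> 'rV[R]_(k.+3) -> 'rV[R]_(k.+3))
  (w : 'rV[R]_(k.+3) -> 'rV[R]_(k.+3) -> R) (z x y : 'rV[R]_(k.+3)) (i0 : 'I_(k.+3)).
Hypothesis brE : forall a b, br a b = w a b *: z.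
Hypothesis wDl : forall c a b e, w (c *: a + b) e = c * w a e + w b e.
Hypothesis wN : forall a b, w a b = - w b a.
Hypothesis wz : forall a, w a z = 0.
Hypothesis wxy : w x y = 1.
Hypothesis zi0 : z 0 i0 != 0.

Let coord := h3_coord w z x y i0.

Lemma lie_isomorphic_h3_plucker :
  plucker w -> lie_isomorphic br (@abelian_plus_h3_bracket R k).
Proof.
move=> plw; pose A := functional_mx coord.
have coordE u : u *m A^T = \row_i coord i u.
  exact/mul_tr_functional_mx/lin_functional_h3_coord.
have zA : z *m A^T = delta_mx 0 (inord 2).
  apply/rowP => -[[|[|[|//]]] ?]; rewrite coordE !mxE eqxx -(inj_eq val_inj) /= inordK //;
    rewrite /coord /h3_coord /= ?wz ?divff //.
  by rewrite wN wz oppr0.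
have [|B B_unit Bz] := @col_mx_completion_vanishing _ 3 k A z (inord 2)
    (row_free_h3_coord wDl wN wz wxy zi0).
  by rewrite zA mxE !eqxx.
pose M := (col_mx A B)^T.
have uM u : u *m M = row_mx (u *m A^T) (u *m B^T) by rewrite /M tr_col_mx mul_mx_row.
have ordE j : (j < 3)%N -> inord j = lshift k (inord j : 'I_3).
  by move=> j3; apply: val_inj; rewrite /= !inordK // (leq_trans j3).
have zM : z *m M = delta_mx 0 (inord 2).
  rewrite uM zA (_ : z *m B^T = 0); last by rewrite -[z]trmxK -trmx_mul Bz trmx0.
  by rewrite -delta_mx_lshift -ordE.
exists (mulmx^~ M); split.
- by move=> a u v; rewrite mulmxDl scalemxAl.
- by exists (mulmx^~ (invmx M)) => u; rewrite /= ?mulmxK ?mulmxKV // unitmx_tr.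
move=> u v; rewrite brE -scalemxAl zM /abelian_plus_h3_bracket.
rewrite !ordE // !uM !(@row_mxEl _ 1 3 k) !coordE !mxE /coord /h3_coord !inordK //=.
congr (_ *: _); have := plw u v x y.
rewrite /plucker_form wxy (wN x v) (wN x u) => plE.
by rewrite -[LHS]subr0 -plE; ring.
Qed.

End H3Isomorphism.

Lemma lie_isomorphic_plucker (R : realType) n (br : 'rV[R]_n -> 'rV[R]_n -> 'rV[R]_n)
    (w : 'rV[R]_n -> 'rV[R]_n -> R) (z x y : 'rV[R]_n) (i0 : 'I_n) :
  (forall a b, br a b = w a b *: z) ->
  (forall c a b e, w (c *: a + b) e = c * w a e + w b e) ->
  (forall a b, w a b = - w b a) -> (forall a, w a z = 0) -> w x y = 1 -> z 0 i0 != 0 ->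
  plucker w -> lie_isomorphic br (@abelian_plus_h3_bracket R (n - 3)).
Proof.
move=> brE wDl wN wz wxy zi0.
have /subnKC := three_leq_dim wDl wN wz wxy zi0.
move: (n - 3)%N => k en; subst n.
exact: lie_isomorphic_h3_plucker brE wDl wN wz wxy zi0.
Qed.

Lemma row_neq0_coord (F : fieldType) n (u : 'rV[F]_n) : u != 0 -> exists i, u 0 i != 0.
Proof.
move=> u0; apply/existsP; apply: contraR u0 => /existsPn u0.
by apply/eqP/rowP => i; rewrite mxE; apply/eqP/negPn/u0.
Qed.

Unset Implicit Arguments.

Theorem mainTheorem17 (R : realType) (d : nat)
    (br : 'rV[R]_(2 * d) -> 'rV[R]_(2 * d) -> 'rV[R]_(2 * d))
    (J : 'M[R]_(2 * d)) (ip : 'rV[R]_(2 * d) -> 'rV[R]_(2 * d) -> R) :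
  is_lie_bracket br -> is_nilpotent br -> derived_dim_one br ->
  is_complex_structure br J -> is_inner_product ip -> is_hermitian J ip ->
  (is_pluriclosed br J ip <->
   lie_isomorphic br (@abelian_plus_h3_bracket R (2 * d - 3))).
Proof.
move=> [brDl _ brN _] nil [z [z0 [brz [x [y xyz]]]]] cplx ipH _.
have [i0 zi0] := row_neq0_coord z0.
pose w u v := br u v 0 i0 / z 0 i0.
have brE a b : br a b = w a b *: z.
  by rewrite /w; have [c ->] := brz a b; rewrite mxE mulfK.
have wDl c a b e : w (c *: a + b) e = c * w a e + w b e.
  by rewrite /w brDl !mxE mulrDl mulrA.
have wN a b : w a b = - w b a by rewrite /w brN mxE mulNr.
have wxy : w x y = 1 by rewrite /w xyz divff.
have wz := nilpotent_form_central brE wDl wN z0 nil.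
have wJ := complex_structure_form_invariant brE z0 cplx.
rewrite (pluriclosed_plucker brE wDl wN wz wJ ipH z0); split.
- exact: lie_isomorphic_plucker brE wDl wN wz wxy zi0.
- exact: (plucker_lie_isomorphic brE z0 wxy).
Qed.
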